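(* Let $G$ be a connected simple graph with $m$ edges and let $k\geq 2$ be an integer. Then $$\chi_{dom}(P_{k+1})\leq \chi_{dom}(G^{\frac{1}{k}})\leq (m-1)\chi_{dom}(P_k)+\chi_{dom}(P_{k+1}).$$
   Context: All graphs are finite and simple. A dominated coloring of a graph $H$ is a proper vertex coloring of $H$ such that for every color class $C$ there is a vertex $x\in V(H)$ adjacent to every vertex of $C$. The dominated chromatic number $\chi_{dom}(H)$ is the minimum number of colors in a dominated coloring of $H$. $P_n$ denotes the path on $n$ vertices. The $k$-subdivision $G^{\frac{1}{k}}$ of $G$ is the graph obtained by replacing each edge $v_iv_j$ of $G$ by a path of length $k$ (i.e. with $k-1$ new internal vertices) between $v_i$ and $v_j$, the internal vertices of distinct such paths being distinct; if $G$ has $n$ vertices and $m$ edges then $G^{\frac{1}{k}}$ has $n+(k-1)m$ vertices and $km$ edges. *)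

From mathcomp Require Import all_boot.
Set Implicit Arguments. Unset Strict Implicit. Unset Printing Implicit Defensive.

(* A simple graph is a finite type V with a symmetric irreflexive relation e. *)

Definition proper_col (V : finType) (e : rel V) (n : nat) (f : {ffun V -> 'I_n}) : bool :=
  [forall x, forall y, e x y ==> (f x != f y)].

Definition dominated_col (V : finType) (e : rel V) (n : nat) (f : {ffun V -> 'I_n}) : bool :=
  proper_col e f && [forall c : 'I_n, exists x, forall y, (f y == c) ==> e x y].

Definition has_dom_col (V : finType) (e : rel V) (n : nat) : bool :=
  [exists f : {ffun V -> 'I_n}, dominated_col e f].

(* Dominated chromatic number: least n admitting a dominated colouring.
   (If a dominated colouring exists, one exists with at most #|V| colours,
   so searching n in 0..#|V| finds the true minimum; the junk value #|V|.+1
   only arises for graphs with no dominated colouring.) *)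
Definition chi_dom (V : finType) (e : rel V) : nat :=
  find (has_dom_col e) (iota 0 #|V|.+1).

Definition path_rel (n : nat) : rel 'I_n :=
  fun i j => (i.+1 == j :> nat) || (j.+1 == i :> nat).

(* Edges of G, each recorded once as an ordered pair (u, w) with u before w. *)
Definition oedge (V : finType) (e : rel V) (p : V * V) : bool :=
  e p.1 p.2 && (enum_rank p.1 < enum_rank p.2).

Definition nedges (V : finType) (e : rel V) : nat := #|[pred p : V * V | oedge e p]|.

Definition edge_t (V : finType) (e : rel V) := {p : V * V | oedge e p}.

(* Vertices of the k-subdivision: original vertices, plus for each edge
   (u,w) the k-1 internal vertices x_1..x_{k-1} (index j : 'I_(k-1) stands for
   x_{j+1}) of the path u = x_0, x_1, ..., x_k = w. *)
Definition subdiv_t (V : finType) (e : rel V) (k : nat) : finType :=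
  (V + (edge_t e * 'I_k.-1))%type.

Definition subdiv_adj0 (V : finType) (e : rel V) (k : nat)
  (a b : subdiv_t e k) : bool :=
  match a, b with
  | inl u, inl w => (k == 1) && e u w
  | inl u, inr (eps, j) =>
      ((val j == 0) && (u == (val eps).1)) || ((val j).+1 == k.-1) && (u == (val eps).2)
  | inr _, inl _ => false
  | inr (eps, j), inr (eps', j') =>
      (eps == eps') && (((val j).+1 == val j') || ((val j').+1 == val j))
  end.

Definition subdiv_rel (V : finType) (e : rel V) (k : nat) : rel (subdiv_t e k) :=
  fun a b => subdiv_adj0 a b || subdiv_adj0 b a.

Arguments path_rel n : clear implicits.
Arguments subdiv_rel {V} e k.
Arguments subdiv_t {V} e k.
Arguments chi_dom {V} e.
Arguments nedges {V} e.

From mathcomp Require Import all_boot zify.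
Set Implicit Arguments. Unset Strict Implicit. Unset Printing Implicit Defensive.

(* Lower bound: the subdivided edge e0 is a copy of P_(k+1) in the k-subdivision, and
   restricting a dominated colouring to it keeps it dominated: for k >= 2 the neighbours
   of any vertex on this copy are neighbours of a single vertex of P_(k+1).
   Upper bound: take a BFS tree rooted at an end of e0 and give every other vertex the
   edge to its parent. The vertices of the subdivision then split into blocks, one per
   edge: its inner vertices plus the original vertices assigned to it. The block of e0
   lies on a copy of P_(k+1), every other block (which gets at most one end) on a copy
   of P_k. Colouring the blocks with dominated colourings of these paths, with disjoint
   palettes, is dominated: a dominating vertex on the path of the edge serves as a
   dominating vertex in the subdivision. *)


Definition adjn (p q : nat) : bool := (p.+1 == q) || (q.+1 == p).

Section DominatedColourings.
Variables (T : finType) (r : rel T).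

Definition dom_colouring (C : finType) (f : T -> C) : Prop :=
  (forall x y, r x y -> f x != f y) /\ (forall c, exists X, forall y, f y = c -> r X y).

Lemma has_dom_colP n : reflect (exists f : T -> 'I_n, dom_colouring f) (has_dom_col r n).
Proof.
apply: (iffP existsP) => [[f /andP [/forallP pr /forallP dom]]|[f [pr dom]]].
  exists f; split=> [x y|c]; first exact: implyP (forallP (pr x) y).
  have /existsP [X /forallP hX] := dom c.
  by exists X => y fy; apply: implyP (hX y) _; rewrite fy.
exists [ffun x => f x]; apply/andP; split.
  by apply/forallP => x; apply/forallP => y; apply/implyP; rewrite !ffunE; apply: pr.
apply/forallP => c; have [X hX] := dom c.
by apply/existsP; exists X; apply/forallP => y; apply/implyP; rewrite ffunE => /eqP /hX.
Qed.

Lemma has_dom_col_card (C : finType) (f : T -> C) : dom_colouring f -> has_dom_col r #|C|.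
Proof.
move=> [pr dom]; apply/has_dom_colP; exists (enum_rank \o f); split=> [x y /pr|c] /=.
  by apply: contra => /eqP /enum_rank_inj ->.
have [X hX] := dom (enum_val c).
by exists X => y /= fy; apply: hX; rewrite -fy enum_rankK.
Qed.

Lemma chi_dom_min n : has_dom_col r n -> chi_dom r <= n.
Proof.
move=> h; rewrite /chi_dom; case: (leqP n #|T|) => hn.
  rewrite leqNgt; apply/negP => /(before_find 0).
  by rewrite nth_iota ?add0n ?h // ltnS.
by apply: leq_trans (find_size _ _) _; rewrite size_iota.
Qed.

Lemma chi_dom_max : chi_dom r <= #|T|.+1.
Proof. by apply: leq_trans (find_size _ _) _; rewrite size_iota. Qed.

Lemma chi_domP : has_dom_col r (chi_dom r) \/ chi_dom r = #|T|.+1.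
Proof.
rewrite /chi_dom; have [hs|hs] := boolP (has (has_dom_col r) (iota 0 #|T|.+1)).
  left; have := nth_find 0 hs; rewrite nth_iota ?add0n //.
  by move: hs; rewrite has_find size_iota.
right; have := find_size (has_dom_col r) (iota 0 #|T|.+1).
move: hs; rewrite has_find size_iota -leqNgt => h1 h2.
by apply/eqP; rewrite eqn_leq h1 h2.
Qed.

Lemma chi_dom_spec n : n <= #|T| -> has_dom_col r n -> has_dom_col r (chi_dom r).
Proof.
move=> hn /chi_dom_min; case: chi_domP => // -> h.
by have := leq_trans h hn; rewrite ltnn.
Qed.

End DominatedColourings.

Lemma dom_colouring_comap (S T C : finType) (s : rel S) (r : rel T)
    (g : S -> T) (f : T -> C) :
  {homo g : x y / s x y >-> r x y} ->
  (forall X, exists z, forall y, r X (g y) -> s z y) ->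
  dom_colouring r f -> dom_colouring s (f \o g).
Proof.
move=> g_homo g_shadow [pr dom]; split=> [x y /g_homo /pr //|c].
have [X hX] := dom c; have [z hz] := g_shadow X.
by exists z => y fy; apply/hz/hX.
Qed.

Lemma chi_dom_le_of_transfer (S T : finType) (s : rel S) (r : rel T) :
  #|S| <= #|T| -> (forall n, has_dom_col r n -> has_dom_col s n) ->
  chi_dom s <= chi_dom r.
Proof.
move=> card_le transfer; case: (chi_domP r) => [/transfer/chi_dom_min //|->].
exact: leq_trans (chi_dom_max s) _.
Qed.

Lemma path_dom_colouring N : dom_colouring (path_rel N.+2) id.
Proof.
split=> [x y /orP [] /eqP h|c]; try by apply/eqP => /(congr1 val) /=; lia.
exists (inord (if c < N.+1 then c.+1 else c.-1)) => y <-.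
rewrite /path_rel inordK; case: ifP => h; have := ltn_ord y; lia.
Qed.

Lemma path_rel_inord N p q :
  p <= N -> q <= N -> path_rel N.+1 (inord p) (inord q) = adjn p q.
Proof. by move=> hp hq; rewrite /path_rel !inordK. Qed.

Lemma chi_dom_path N : has_dom_col (path_rel N.+2) (chi_dom (path_rel N.+2)).
Proof.
apply: (@chi_dom_spec _ _ N.+2); first by rewrite card_ord.
by have := has_dom_col_card (path_dom_colouring N); rewrite card_ord.
Qed.

Section EdgeAssignment.
Variables (V : finType) (e : rel V).
Hypotheses (e_sym : symmetric e) (e_irr : irreflexive e)
  (e_conn : forall x y : V, connect e x y).
Local Notation E := (edge_t e).
Variable e0 : E.
Local Notation u0 := (val e0).1.

Definition reach_in (d : nat) (v : V) : bool :=
  [exists p : d.-tuple V, path e u0 p && (last u0 p == v)].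

Lemma reach_in_exists v : exists d, reach_in d v.
Proof.
have /connectP [p hp hl] := e_conn u0 v.
by exists (size p); apply/existsP; exists (in_tuple p); rewrite /= hp -hl eqxx.
Qed.

Definition dist (v : V) : nat := ex_minn (reach_in_exists v).

Lemma dist_min v d : reach_in d v -> dist v <= d.
Proof. by rewrite /dist; case: ex_minnP => d' _; apply. Qed.

Lemma reach_in_dist v : reach_in (dist v) v.
Proof. by rewrite /dist; case: ex_minnP. Qed.

Lemma dist_descent v : v != u0 -> exists y, e v y && (dist y < dist v).
Proof.
move=> hv; have /existsP [p /andP [hp /eqP hl]] := reach_in_dist v.
move: (size_tuple p) hp hl; case/lastP: (tval p) => [_ _ /= hl|q x].
  by rewrite hl eqxx in hv.
rewrite size_rcons last_rcons rcons_path => hs /andP [hq hx] hxv; subst v.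
exists (last u0 q); rewrite e_sym hx /= -hs ltnS.
by apply: dist_min; apply/existsP; exists (in_tuple q); rewrite /= hq eqxx.
Qed.

Definition parent (v : V) : V := odflt u0 [pick y | e v y && (dist y < dist v)].

Lemma parentP v : v != u0 -> e v (parent v) && (dist (parent v) < dist v).
Proof.
move=> hv; rewrite /parent; case: pickP => [y -> //|none].
by have [y hy] := dist_descent hv; rewrite none in hy.
Qed.

Definition parent_edge (v : V) : E :=
  insubd e0 (if enum_rank v < enum_rank (parent v) then (v, parent v) else (parent v, v)).

Lemma parent_edgeE v : v != u0 -> val (parent_edge v) =
  if enum_rank v < enum_rank (parent v) then (v, parent v) else (parent v, v).
Proof.
move=> hv; rewrite /parent_edge insubdK //; have /andP [hvp _] := parentP hv.
have hne : (enum_rank v : nat) != enum_rank (parent v).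
  by apply: contraTneq hvp => /val_inj /enum_rank_inj <-; rewrite e_irr.
rewrite unfold_in /oedge; case: ifP => lt /=; first by rewrite hvp lt.
by rewrite e_sym hvp ltn_neqAle eq_sym hne leqNgt lt.
Qed.

Lemma parent_edge_end v : v != u0 ->
  ((val (parent_edge v)).1 == v) || ((val (parent_edge v)).2 == v).
Proof. by move=> hv; rewrite parent_edgeE //; case: ifP; rewrite /= eqxx ?orbT. Qed.

(* Two vertices sharing their parent edge would each be the parent of the other. *)
Lemma parent_edge_inj v v' :
  v != u0 -> v' != u0 -> parent_edge v = parent_edge v' -> v = v'.
Proof.
move=> hv hv' /(congr1 val); rewrite !parent_edgeE //.
have /andP [_ d] := parentP hv; have /andP [_ d'] := parentP hv'.
case: ifP => _; case: ifP => _ [h1 h2] //.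
  by rewrite h2 in d; rewrite -h1 in d'; have := ltn_trans d d'; rewrite ltnn.
by rewrite h1 in d; rewrite -h2 in d'; have := ltn_trans d d'; rewrite ltnn.
Qed.

Lemma edge_assignment : exists2 vb : V -> E,
  forall v, ((val (vb v)).1 == v) || ((val (vb v)).2 == v) &
  forall v v', vb v = vb v' -> vb v != e0 -> v = v'.
Proof.
exists (fun v => if v == u0 then e0 else parent_edge v) => [v|v v'].
  by case: (eqVneq v u0) => [->|/parent_edge_end //]; rewrite eqxx.
case: (eqVneq v u0) => [_ _|hv]; first by rewrite eqxx.
by case: (eqVneq v' u0) => [_ ->|hv' /(parent_edge_inj hv hv') //]; rewrite eqxx.
Qed.

End EdgeAssignment.

Section Subdivision.
Variables (V : finType) (e : rel V).
Hypothesis e_irr : irreflexive e.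
Variable n : nat.
Local Notation k := n.+2.
Local Notation E := (edge_t e).
Local Notation T := (subdiv_t e k).
Local Notation r := (subdiv_rel e k).

Lemma subdivLL u w : r (inl u) (inl w) = false.
Proof. by []. Qed.

Lemma subdivLR u (eps : E) (j : 'I_k.-1) : r (inl u) (inr (eps, j)) =
  ((j == 0 :> nat) && (u == (val eps).1)) || ((j.+1 == n.+1) && (u == (val eps).2)).
Proof. by rewrite /subdiv_rel /= orbF. Qed.

Lemma subdivRL u (eps : E) (j : 'I_k.-1) : r (inr (eps, j)) (inl u) =
  ((j == 0 :> nat) && (u == (val eps).1)) || ((j.+1 == n.+1) && (u == (val eps).2)).
Proof. by []. Qed.

Lemma subdivRR (eps eps' : E) (i j : 'I_k.-1) :
  r (inr (eps, i)) (inr (eps', j)) = (eps == eps') && adjn i j.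
Proof.
rewrite /subdiv_rel /= (eq_sym eps').
by case: (eps == eps') => //=; rewrite /adjn [X in _ || X]orbC orbb.
Qed.

Lemma edge_adj (eps : E) : e (val eps).1 (val eps).2.
Proof. by case/andP: (valP eps). Qed.

Lemma edge_ends_neq (eps : E) : ((val eps).1 == (val eps).2) = false.
Proof. by apply/negbTE/eqP => h; have := edge_adj eps; rewrite h e_irr. Qed.

Lemma edge_eq_of_ends (eps eps' : E) :
  (val eps').1 \in [:: (val eps).1; (val eps).2] ->
  (val eps').2 \in [:: (val eps).1; (val eps).2] -> eps' = eps.
Proof.
case: eps eps' => [[u w] h] [[u' w'] h'] /=.
have /andP [_ lt] := h; have /andP [e' lt'] := h'.
have neq : u' != w' by apply: contraTneq e' => ->; rewrite e_irr.
rewrite !inE => /orP [] /eqP hu /orP [] /eqP hw; subst u' w';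
  rewrite ?eqxx // in neq; first by apply: val_inj.
by move: lt lt' => /= lt lt'; lia.
Qed.

Definition epath (eps : E) (p : nat) : T :=
  if p == 0 then inl (val eps).1
  else if p < k then inr (eps, inord p.-1) else inl (val eps).2.

Lemma epath0 eps : epath eps 0 = inl (val eps).1.
Proof. by []. Qed.

Lemma epath_end eps : epath eps k = inl (val eps).2.
Proof. by rewrite /epath /= ltnn. Qed.

Lemma epath_inner eps p : 0 < p < k -> epath eps p = inr (eps, inord p.-1).
Proof. by rewrite /epath => /andP [/prednK <- /= ->]. Qed.

Lemma epath_adjE eps p q : p <= k -> q <= k -> r (epath eps p) (epath eps q) = adjn p q.
Proof.
have hneq := edge_ends_neq eps; have hneq' : ((val eps).2 == (val eps).1) = false.
  by rewrite eq_sym.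
move=> hp hq.
have [->|p0] := eqVneq p 0; [|have [pk|->] : p < k \/ p = k by lia];
  (have [->|q0] := eqVneq q 0; [|have [qk|->] : q < k \/ q = k by lia]);
  rewrite ?epath0 ?epath_end ?epath_inner ?lt0n ?p0 ?q0 //
    ?subdivLL ?subdivLR ?subdivRL ?subdivRR ?eqxx ?hneq ?hneq' /adjn /= ?inordK; lia.
Qed.

Lemma epath_shadow (e0 : E) (x : T) : exists2 z, z <= k &
  forall q, q <= k -> r x (epath e0 q) -> adjn z q.
Proof.
have hneq := edge_ends_neq e0.
have hneq' : ((val e0).2 == (val e0).1) = false by rewrite eq_sym.
case: x => [v|[eps j]].
  exists (if v == (val e0).2 then k else 0) => [|q hq]; first by case: ifP.
  have [->|q0] := eqVneq q 0; [|have [qk|->] : q < k \/ q = k by lia];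
    rewrite ?epath0 ?epath_end ?epath_inner ?lt0n ?q0 // subdivLR inordK; try lia.
  case: (eqVneq v (val e0).2) => [->|nv].
    by rewrite hneq' andbF andbT => /eqP h; rewrite /adjn; lia.
  by rewrite andbF orbF => /andP [/eqP h _]; rewrite /adjn; lia.
have [->|hne] := eqVneq eps e0.
  exists j.+1 => [|q hq]; first by have /= := ltn_ord j; lia.
  have [->|q0] := eqVneq q 0; [|have [qk|->] : q < k \/ q = k by lia].
  - by rewrite epath0 subdivRL eqxx hneq andbT andbF orbF => /eqP h; rewrite /adjn; lia.
  - by rewrite epath_inner ?lt0n ?q0 // subdivRR eqxx /adjn inordK /=; lia.
  - by rewrite epath_end subdivRL eqxx hneq' andbF andbT => /eqP h; rewrite /adjn; lia.
(* An inner vertex of another edge cannot see both ends of [e0]: the edge would be [e0]. *)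
have no_two_ends :
    r (inr (eps, j)) (inl (val e0).1) -> ~~ r (inr (eps, j)) (inl (val e0).2).
  rewrite !subdivRL => h1; apply: contra hne => h2; rewrite eq_sym.
  apply/eqP/edge_eq_of_ends; rewrite !inE.
    by case/orP: h1 => /andP [_ ->]; rewrite ?orbT.
  by case/orP: h2 => /andP [_ ->]; rewrite ?orbT.
exists (if r (inr (eps, j)) (inl (val e0).1) then 1 else k.-1) => [|q hq].
  by case: ifP.
have [->|q0] := eqVneq q 0; [|have [qk|->] : q < k \/ q = k by lia].
- by rewrite epath0 => ->.
- by rewrite epath_inner ?lt0n ?q0 // subdivRR (negbTE hne).
- rewrite epath_end => hw; case: ifP => hu; last by rewrite /adjn; lia.
  by have := no_two_ends hu; rewrite hw.
Qed.

Lemma has_dom_col_subdiv_path (e0 : E) c :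
  has_dom_col r c -> has_dom_col (path_rel k.+1) c.
Proof.
move=> /has_dom_colP [f hf]; apply/has_dom_colP.
have hle (q : 'I_k.+1) : q <= k by rewrite -ltnS.
exists (f \o (fun q : 'I_k.+1 => epath e0 q)); apply: dom_colouring_comap hf.
  by move=> p q; rewrite /= epath_adjE.
move=> X; have [z hz shadow] := epath_shadow e0 X.
by exists (inord z) => q /shadow; rewrite /path_rel inordK //; apply.
Qed.

Lemma card_subdiv_ge (e0 : E) : k.+1 <= #|T|.
Proof.
rewrite card_sum card_prod card_ord.
have card_V : 2 <= #|V|.
  have := subset_leq_card (subsetT [set (val e0).1; (val e0).2]).
  by rewrite cards2 edge_ends_neq cardsT.
have card_E : 0 < #|{: E}| by apply/card_gt0P; exists e0.
by rewrite -[k.+1]/(2 + n.+1); apply: leq_add card_V (leq_pmull _ card_E).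
Qed.

Section BlockColouring.
Variables (e0 : E) (vb : V -> E).
Hypotheses (vb_end : forall v, ((val (vb v)).1 == v) || ((val (vb v)).2 == v))
  (vb_inj : forall v v', vb v = vb v' -> vb v != e0 -> v = v').

Definition block (x : T) : E := match x with inl v => vb v | inr (eps, _) => eps end.

Definition pos (x : T) : nat :=
  match x with inl v => if (val (vb v)).1 == v then 0 else k | inr (_, j) => j.+1 end.

(* If the second end of [eps] is assigned to [eps], the positions of its block are
   shifted down by one to fit in [P_k]. *)
Definition shifted (eps : E) : bool := vb (val eps).2 == eps.

Lemma pos_le x : pos x <= k.
Proof.
case: x => [v|[eps j]] /=; first by case: ifP.
by have /= := ltn_ord j; lia.
Qed.

Lemma epath_block_pos x : epath (block x) (pos x) = x.
Proof.
case: x => [v|[eps j]] /=; last first.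
  by rewrite epath_inner ?inord_val //; have /= := ltn_ord j; lia.
case: ifP => [/eqP h|h]; first by rewrite epath0 h.
by rewrite epath_end; move: (vb_end v); rewrite h => /eqP ->.
Qed.

Lemma pos_shifted_range x : block x != e0 ->
  shifted (block x) <= pos x <= n.+1 + shifted (block x).
Proof.
case: x => [v|[eps j]] /=; last by have /= := ltn_ord j; case: (shifted eps); lia.
rewrite /shifted => hv; case: ifP => [/eqP h1|h1].
  suff -> : (vb (val (vb v)).2 == vb v) = false by [].
  apply/negbTE/eqP => h; have h2 : (val (vb v)).2 = v by apply: (vb_inj h); rewrite h.
  by move: (edge_ends_neq (vb v)); rewrite h1 h2 eqxx.
have h2 : (val (vb v)).2 == v by move: (vb_end v); rewrite h1.
by rewrite (eqP h2) eqxx; lia.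
Qed.

Variables (CA CB : finType) (fA : 'I_k -> CA) (fB : 'I_k.+1 -> CB).
Hypotheses (fA_dom : dom_colouring (path_rel k) fA)
  (fB_dom : dom_colouring (path_rel k.+1) fB).

Definition block_colour (x : T) : {eps : E | eps != e0} * CA + CB :=
  if insub (block x) is Some b then inl (b, fA (inord (pos x - shifted (block x))))
  else inr (fB (inord (pos x))).

Lemma block_colour_block x y : block_colour x = block_colour y -> block x = block y.
Proof.
rewrite /block_colour; case: insubP => [b _ hb|/negPn/eqP ->];
  case: insubP => [b' _ hb'|/negPn/eqP ->] //.
by case=> eb _; rewrite -hb -hb' eb.
Qed.

Lemma block_colour_proper x y : r x y -> block_colour x != block_colour y.
Proof.
move=> rxy; apply/negP => /eqP same; have hb := block_colour_block same.
have adj : adjn (pos x) (pos y).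
  by rewrite -(epath_adjE (block x)) ?pos_le // epath_block_pos hb epath_block_pos.
have px := pos_le x; have py := pos_le y.
move: same; rewrite /block_colour -hb; case: insubP => [b hne _|_] [].
  have rx := pos_shifted_range hne; rewrite hb in hne; have ry := pos_shifted_range hne.
  rewrite -hb in ry; apply/eqP; apply: fA_dom.1.
  by rewrite path_rel_inord; rewrite /adjn in adj *; lia.
by apply/eqP; apply: fB_dom.1; rewrite path_rel_inord.
Qed.

Lemma block_colour_dom c : exists X, forall y, block_colour y = c -> r X y.
Proof.
case: c => [[b i]|i].
  have [z hz] := fA_dom.2 i; exists (epath (val b) (z + shifted (val b))) => y.
  rewrite /block_colour; case: insubP => [b' hne hb'|//] [eb hi]; subst b'.
  have rng := pos_shifted_range hne; have py := pos_le y; have := ltn_ord z.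
  have := hz _ hi; rewrite /path_rel inordK; last lia.
  rewrite hb' -[X in r _ X]epath_block_pos /adjn => *; rewrite epath_adjE /adjn; lia.
have [z hz] := fB_dom.2 i; exists (epath e0 z) => y.
rewrite /block_colour; case: insubP => [//|/negPn/eqP hy [hi]].
have := hz _ hi; rewrite /path_rel inordK; last by have := pos_le y; lia.
have := pos_le y; have := ltn_ord z.
rewrite -[X in r _ X]epath_block_pos hy => *; rewrite epath_adjE /adjn; lia.
Qed.

Lemma has_dom_col_block_colour : has_dom_col r (#|{: E}|.-1 * #|CA| + #|CB|).
Proof.
have := has_dom_col_card (conj block_colour_proper block_colour_dom).
by rewrite card_sum card_prod card_sig cardC1.
Qed.

End BlockColouring.
End Subdivision.

Theorem theorem4p2 (V : finType) (e : rel V)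
  (e_sym : symmetric e) (e_irr : irreflexive e)
  (e_conn : forall x y : V, connect e x y)
  (m_pos : 0 < nedges e)
  (k : nat) (hk : 2 <= k) :
  chi_dom (path_rel k.+1) <= chi_dom (subdiv_rel e k)
  <= (nedges e).-1 * chi_dom (path_rel k) + chi_dom (path_rel k.+1).
Proof.
case: k hk => [|[|n]] // _.
have card_E : nedges e = #|{: edge_t e}| by rewrite /nedges card_sig.
have /card_gt0P [e0 _] : 0 < #|{: edge_t e}| by rewrite -card_E.
apply/andP; split.
  apply: chi_dom_le_of_transfer; first by rewrite card_ord (card_subdiv_ge e_irr _ e0).
  exact: has_dom_col_subdiv_path e_irr _ e0.
have [vb vb_end vb_inj] := edge_assignment e_sym e_irr e_conn e0.
have /has_dom_colP [fA fA_dom] := chi_dom_path n.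
have /has_dom_colP [fB fB_dom] := chi_dom_path n.+1.
apply: chi_dom_min; rewrite card_E.
by have := has_dom_col_block_colour e_irr vb_end vb_inj fA_dom fB_dom; rewrite !card_ord.
Qed.
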